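(* Suppose Assumption 1 holds and there is $\eta\in[0,1)$ such that every $d^k$ satisfies the $\eta$-inexactness condition for $Q_k=Q^{x^k}_{H_k}$ ($f$ need not be convex). For Algorithm 1, if $H_k\succeq\sigma I$ for some $\sigma>0$ and all $k$, then for all $k\ge0$ $$\min_{0\le t\le k}|Q_t(d^t)|\le\frac{F(x^0)-F^*}{\gamma(k+1)\min_{0\le t\le k}\alpha_t}\le\frac{F(x^0)-F^*}{\gamma(k+1)}\max\left\{1,\ \frac{(1+\sqrt\eta)L}{2\beta(1-\gamma)\sigma}\right\}.$$ For Algorithm 2 (with $H^0_k\succ0$ for Variant 1), with $Q_t=Q^{x^t}_{H_t}$ for the final $H_t$, $$\min_{0\le t\le k}|Q_t(d^t)|\le\frac{F(x^0)-F^*}{\gamma(k+1)}.$$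
   Context: Problem setting: $F(x)=f(x)+\psi(x)$ on $\mathbb{R}^n$, $F^*=\inf F$. Assumption 1: $f$ is differentiable with $L$-Lipschitz continuous gradient ($L>0$); $\psi:\mathbb{R}^n\to\mathbb{R}\cup\{+\infty\}$ is convex, proper and closed; $F$ is bounded below; the solution set $\Omega=\{x:F(x)=F^*\}$ is nonempty. For $x\in\mathbb{R}^n$ and symmetric $H$, $Q^x_H(d)\coloneqq\nabla f(x)^Td+\frac12d^THd+\psi(x+d)-\psi(x)$, $Q^*=\inf_dQ^x_H(d)$; $d$ satisfies the $\eta$-inexactness condition if $Q^x_H(d)\le(1-\eta)Q^*$. Algorithm 1: given $\beta,\gamma\in(0,1)$, $x^0$, fixed $\eta\in[0,1)$; for $k=0,1,\dots$: choose symmetric $H_k$ with $Q_k\coloneqq Q^{x^k}_{H_k}$ strongly convex; compute $d^k$ satisfying the $\eta$-inexactness condition for $Q_k$; let $\Delta_k=\nabla f(x^k)^Td^k+\psi(x^k+d^k)-\psi(x^k)$; let $\alpha_k=\beta^i$ for the smallest nonnegative integer $i$ with $F(x^k+\alpha_kd^k)\le F(x^k)+\alpha_k\gamma\Delta_k$; set $x^{k+1}=x^k+\alpha_kd^k$. Algorithm 2: given $\beta\in(0,1)$, $\gamma\in(0,1]$, $x^0$, fixed $\eta\in[0,1)$; for each $k$: choose symmetric $H^0_k$ (in Variant 1, $H^0_k\succ0$); set $\alpha_k\leftarrow1$, $H_k\leftarrow H^0_k$, compute $d^k$ satisfying the $\eta$-inexactness condition for $Q^{x^k}_{H_k}$;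 while $F(x^k)-F(x^k+d^k)\ge-\gamma Q^{x^k}_{H_k}(d^k)\ge0$ fails: Variant 1 sets $\alpha_k\leftarrow\beta\alpha_k$, $H_k\leftarrow H^0_k/\alpha_k$; Variant 2 sets $H_k\leftarrow H^0_k+\alpha_k^{-1}I$, then $\alpha_k\leftarrow\beta\alpha_k$; then $d^k$ is recomputed satisfying the $\eta$-inexactness condition. Finally $x^{k+1}=x^k+d^k$; ''final $H_k$'' is the accepted matrix. *)

From Stdlib Require Import Reals.
From mathcomp Require Import ssreflect ssrbool ssrfun eqtype ssrnat seq fintype bigop.
Set Implicit Arguments.
Unset Strict Implicit.
Open Scope R_scope.

Definition vec (n : nat) := 'I_n -> R.
Definition mat (n : nat) := 'I_n -> 'I_n -> R.

Section LinAlg.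
Variable n : nat.

Definition vadd (u v : vec n) : vec n := fun i => u i + v i.
Definition vsub (u v : vec n) : vec n := fun i => u i - v i.
Definition vscale (a : R) (v : vec n) : vec n := fun i => a * v i.
Definition dot (u v : vec n) : R := \big[Rplus/0]_(i < n) (u i * v i).
Definition norm (v : vec n) : R := sqrt (dot v v).

Definition mulmv (H : mat n) (v : vec n) : vec n :=
  fun i => \big[Rplus/0]_(j < n) (H i j * v j).
Definition quad (H : mat n) (v : vec n) : R := dot v (mulmv H v).
Definition idm : mat n := fun i j => if i == j then 1 else 0.
Definition madd (A B : mat n) : mat n := fun i j => A i j + B i j.
Definition mscale (a : R) (A : mat n) : mat n := fun i j => a * A i j.
Definition symmetric (H : mat n) : Prop := forall i j, H i j = H j i.
Definition psd_ge (sigma : R) (H : mat n) : Prop :=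
  forall v, sigma * (norm v) ^ 2 <= quad H v.
Definition posdef (H : mat n) : Prop :=
  forall v, v <> (fun _ => 0) -> 0 < quad H v.

End LinAlg.

Arguments vadd {n}. Arguments vsub {n}. Arguments vscale {n}.
Arguments dot {n}. Arguments norm {n}. Arguments mulmv {n}.
Arguments quad {n}. Arguments idm {n}. Arguments madd {n}.
Arguments mscale {n}. Arguments symmetric {n}. Arguments psd_ge {n}.
Arguments posdef {n}.

Definition is_inf_on {T : Type} (P : T -> Prop) (g : T -> R) (m : R) : Prop :=
  (forall v, P v -> m <= g v) /\
  (forall m', (forall v, P v -> m' <= g v) -> m' <= m).

Fixpoint min_upto (g : nat -> R) (k : nat) : R :=
  match k with
  | O => g O
  | S k' => Rmin (min_upto g k') (g (S k'))
  end.

(* ---------------- Problem setting ----------------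
   psi : R^n -> R u {+oo} is represented by its effective domain D and a
   real-valued function psi, with psi = +oo outside D. *)
Section Problem.
Variable n : nat.
Variables (f : vec n -> R) (gradf : vec n -> vec n) (D : vec n -> Prop)
          (psi : vec n -> R).

Definition Fv (x : vec n) : R := f x + psi x.

Definition is_gradient : Prop :=
  forall x eps, 0 < eps -> exists del, 0 < del /\
    forall h, norm h < del ->
      Rabs (f (vadd x h) - f x - dot (gradf x) h) <= eps * norm h.

Definition lipschitz_grad (L : R) : Prop :=
  forall x y, norm (vsub (gradf x) (gradf y)) <= L * norm (vsub x y).

Definition psi_convex : Prop :=
  forall x y t, D x -> D y -> 0 <= t <= 1 ->
    D (vadd (vscale t x) (vscale (1 - t) y)) /\
    psi (vadd (vscale t x) (vscale (1 - t) y)) <= t * psi x + (1 - t) * psi y.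

Definition psi_proper : Prop := exists x, D x.

Definition psi_closed : Prop :=
  forall (xs : nat -> vec n) (ts : nat -> R) (x : vec n) (t : R),
    (forall j, D (xs j) /\ psi (xs j) <= ts j) ->
    Un_cv (fun j => norm (vsub (xs j) x)) 0 -> Un_cv ts t ->
    D x /\ psi x <= t.

(* Assumption 1, with Fstar = inf F and Omega nonempty *)
Definition assumption1 (L Fstar : R) : Prop :=
  0 < L /\ is_gradient /\ lipschitz_grad L /\
  psi_convex /\ psi_proper /\ psi_closed /\
  is_inf_on D Fv Fstar /\
  (exists xs, D xs /\ Fv xs = Fstar).

(* Q^x_H(d) (finite part; Q^x_H(d) = +oo when x + d is not in D) *)
Definition Qval (x : vec n) (H : mat n) (d : vec n) : R :=
  dot (gradf x) d + / 2 * quad H d + psi (vadd x d) - psi x.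

Definition Qdom (x : vec n) (d : vec n) : Prop := D (vadd x d).

Definition eta_inexact (eta : R) (x : vec n) (H : mat n) (d : vec n) : Prop :=
  Qdom x d /\
  exists qstar, is_inf_on (Qdom x) (Qval x H) qstar /\
                Qval x H d <= (1 - eta) * qstar.

Definition Q_strongly_convex (x : vec n) (H : mat n) : Prop :=
  exists mu, 0 < mu /\
    forall d1 d2 t, 0 <= t <= 1 -> Qdom x d1 -> Qdom x d2 ->
      Qval x H (vadd (vscale t d1) (vscale (1 - t) d2)) <=
        t * Qval x H d1 + (1 - t) * Qval x H d2
        - mu / 2 * t * (1 - t) * (norm (vsub d1 d2)) ^ 2.

Definition Delta (x d : vec n) : R :=
  dot (gradf x) d + psi (vadd x d) - psi x.

Definition armijo (gamma : R) (x d : vec n) (a : R) : Prop :=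
  D (vadd x (vscale a d)) /\
  Fv (vadd x (vscale a d)) <= Fv x + a * gamma * Delta x d.

Definition alg1_run (beta gamma eta : R) (x0 : vec n)
    (x : nat -> vec n) (H : nat -> mat n) (d : nat -> vec n)
    (alpha : nat -> R) : Prop :=
  0 < beta < 1 /\ 0 < gamma < 1 /\ 0 <= eta < 1 /\ x O = x0 /\
  forall k,
    symmetric (H k) /\ Q_strongly_convex (x k) (H k) /\
    eta_inexact eta (x k) (H k) (d k) /\
    (exists i : nat, alpha k = beta ^ i /\ armijo gamma (x k) (d k) (beta ^ i) /\
       forall j : nat, (j < i)%N -> ~ armijo gamma (x k) (d k) (beta ^ j)) /\
    x (S k) = vadd (x k) (vscale (alpha k) (d k)).

Definition accept2 (gamma : R) (x : vec n) (H : mat n) (d : vec n) : Prop :=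
  D (vadd x d) /\
  Fv x - Fv (vadd x d) >= - gamma * Qval x H d /\
  - gamma * Qval x H d >= 0.

End Problem.

Inductive variant := Variant1 | Variant2.

(* Matrix used at trial j (j-th pass, starting at 0) of iteration k of
   Algorithm 2, given H^0_k. Variant 1: alpha = beta^j, H = H0/alpha. *)
Definition trial_mat {n} (v : variant) (beta : R) (H0 : mat n) (j : nat) : mat n :=
  match v with
  | Variant1 => mscale (/ beta ^ j) H0
  | Variant2 => match j with
                | O => H0
                | S j' => madd H0 (mscale (/ beta ^ j') idm)
                end
  end.

Section Alg2.
Variable n : nat.
Variables (f : vec n -> R) (gradf : vec n -> vec n) (D : vec n -> Prop)
          (psi : vec n -> R).

(* A run of Algorithm 2: iteration k performs m k failed trials
   j = 0 .. m k - 1 and accepts trial m k; Hs k j and ds k j are the matrix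
   and direction of trial j. *)
Definition alg2_run (v : variant) (beta gamma eta : R) (x0 : vec n)
    (x : nat -> vec n) (H0 : nat -> mat n) (m : nat -> nat)
    (Hs : nat -> nat -> mat n) (ds : nat -> nat -> vec n) : Prop :=
  0 < beta < 1 /\ 0 < gamma <= 1 /\ 0 <= eta < 1 /\ x O = x0 /\
  forall k,
    symmetric (H0 k) /\ (v = Variant1 -> posdef (H0 k)) /\
    (forall j, Hs k j = trial_mat v beta (H0 k) j) /\
    (forall j, (j <= m k)%N -> eta_inexact gradf D psi eta (x k) (Hs k j) (ds k j)) /\
    (forall j, (j < m k)%N -> ~ accept2 f gradf D psi gamma (x k) (Hs k j) (ds k j)) /\
    accept2 f gradf D psi gamma (x k) (Hs k (m k)) (ds k (m k)) /\
    x (S k) = vadd (x k) (ds k (m k)).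

End Alg2.

From Pilot Require Import Defs.
From Stdlib Require Import Reals Lra FunctionalExtensionality.
From mathcomp Require Import ssreflect ssrbool ssrfun eqtype ssrnat seq fintype bigop.
Set Implicit Arguments.
Unset Strict Implicit.
Open Scope R_scope.

(** Write [Q(d) = Delta + q/2] with [q = d^T H d]. Convexity of [psi] makes
    [x + t d] feasible for the subproblem, so [Q* <= t Delta + t^2 q / 2] for
    [t] in [[0, 1]]; combined with [Q(d) <= (1 - eta) Q*] this yields
    [Q(d) <= 0] and [q <= (1 + sqrt eta) (-Delta)]. With [H >= sigma I] and the
    descent lemma for the [L]-smooth [f], every step
    [a <= 2 (1 - gamma) sigma / ((1 + sqrt eta) L)] passes the Armijo test, so
    backtracking stops with [alpha_k >= min(1, beta * that bound)]. Each
    iteration of Algorithm 1 decreases [F] by at least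
    [gamma alpha_k |Q_k(d^k)|], and each iteration of Algorithm 2 by at least
    [gamma |Q_k(d^k)|] (its acceptance test); summing these decreases against
    [F(x^0) - F^*] gives both rates. *)

Section Sums.
Variable n : nat.
Implicit Types F G : 'I_n -> R.

Lemma sumR_add F G :
  \big[Rplus/0]_(i < n) (F i + G i) =
  \big[Rplus/0]_(i < n) F i + \big[Rplus/0]_(i < n) G i.
Proof.
apply: (big_rec3 (fun a b c => a = b + c)); first lra.
by move=> i y1 y2 y3 _ ->; lra.
Qed.

Lemma sumR_scale c F :
  \big[Rplus/0]_(i < n) (c * F i) = c * \big[Rplus/0]_(i < n) F i.
Proof.
apply: (big_ind2 (fun a b => a = c * b)) => //; first lra.
by move=> x1 x2 y1 y2 -> ->; lra.
Qed.

Lemma sumR_le F G : (forall i, F i <= G i) ->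
  \big[Rplus/0]_(i < n) F i <= \big[Rplus/0]_(i < n) G i.
Proof.
move=> FG; apply: (big_ind2 (fun a b => a <= b)) => //; first lra.
by move=> x1 x2 y1 y2; lra.
Qed.

End Sums.

Section Vectors.
Variable n : nat.
Implicit Types (u v w x d : vec n) (H : mat n).

Lemma vadd0 u : vadd u (fun _ => 0) = u.
Proof. by apply: functional_extensionality => i; rewrite /vadd; ring. Qed.

Lemma vadd_convex_shift x d t :
  vadd (vscale t (vadd x d)) (vscale (1 - t) x) = vadd x (vscale t d).
Proof. by apply: functional_extensionality => i; rewrite /vadd /vscale; ring. Qed.

Lemma dotZl c u v : dot (vscale c u) v = c * dot u v.
Proof. by rewrite /dot -sumR_scale; apply: eq_bigr => i _; rewrite /vscale; ring. Qed.

Lemma dotZr c u v : dot u (vscale c v) = c * dot u v.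
Proof. by rewrite /dot -sumR_scale; apply: eq_bigr => i _; rewrite /vscale; ring. Qed.

Lemma dotBl u w v : dot (vsub u w) v = dot u v - dot w v.
Proof.
rewrite /dot.
have -> : \big[Rplus/0]_(i < n) (vsub u w i * v i) =
          \big[Rplus/0]_(i < n) (u i * v i + (-1) * (w i * v i)).
  by apply: eq_bigr => i _; rewrite /vsub; ring.
by rewrite sumR_add sumR_scale; ring.
Qed.

Lemma dot0r u : dot u (fun _ => 0) = 0.
Proof. by rewrite /dot; elim/big_rec: _ => // i y _ ->; ring. Qed.

Lemma dot_self_ge0 u : 0 <= dot u u.
Proof.
apply: (big_ind (fun a => 0 <= a)); first lra.
  by move=> ? ? ? ?; lra.
by move=> i _; nra.
Qed.

Lemma norm_sq u : norm u ^ 2 = dot u u.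
Proof. by rewrite /norm pow2_sqrt //; apply: dot_self_ge0. Qed.

Lemma normZ c u : norm (vscale c u) = Rabs c * norm u.
Proof.
rewrite /norm dotZl dotZr -Rmult_assoc sqrt_mult_alt; last nra.
by rewrite -sqrt_Rsqr_abs.
Qed.

Lemma mulmvZ H c u : mulmv H (vscale c u) = vscale c (mulmv H u).
Proof.
apply: functional_extensionality => i; rewrite /mulmv /vscale -sumR_scale.
by apply: eq_bigr => j _; ring.
Qed.

Lemma quadZ H c u : quad H (vscale c u) = c ^ 2 * quad H u.
Proof. by rewrite /quad mulmvZ dotZl dotZr; ring. Qed.

Lemma quad0 H : quad H (fun _ => 0) = 0.
Proof.
rewrite /quad.
have -> : mulmv H (fun _ => 0) = (fun _ => 0).
  by apply: functional_extensionality => i; rewrite /mulmv;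
     elim/big_rec: _ => // j y _ ->; ring.
exact: dot0r.
Qed.

Lemma dot_young lam u v : 0 < lam ->
  2 * dot u v <= lam * dot u u + / lam * dot v v.
Proof.
move=> lam_gt0; rewrite /dot -!sumR_scale -sumR_add; apply: sumR_le => i.
have lamK : lam * / lam = 1 by field; lra.
have : 0 <= lam * (u i - / lam * v i) ^ 2 by apply: Rmult_le_pos; [lra | apply: pow2_ge_0].
have -> : lam * (u i - / lam * v i) ^ 2 =
  lam * (u i * u i) - 2 * (u i * v i) * (lam * / lam) +
  / lam * (v i * v i) * (lam * / lam) by ring.
by rewrite lamK; lra.
Qed.

End Vectors.

Section Smoothness.
Variables (n : nat) (f : vec n -> R) (gradf : vec n -> vec n) (L : R).
Hypothesis grad_f : is_gradient f gradf.
Hypothesis lip_gradf : lipschitz_grad gradf L.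
Hypothesis L_gt0 : 0 < L.

Lemma derivable_along x d s :
  derivable_pt_lim (fun s => f (vadd x (vscale s d))) s
                   (dot (gradf (vadd x (vscale s d))) d).
Proof.
move=> eps eps_gt0.
set y := vadd x (vscale s d).
have nd_ge0 : 0 <= norm d by apply: sqrt_pos.
have eps'_gt0 : 0 < eps / (2 * (norm d + 1)) by apply: Rdiv_lt_0_compat; lra.
have [del [del_gt0 Hdel]] := grad_f y eps'_gt0.
have del'_gt0 : 0 < del / (norm d + 1) by apply: Rdiv_lt_0_compat; lra.
exists (mkposreal _ del'_gt0) => h h_neq0 /= h_small.
have -> : vadd x (vscale (s + h) d) = vadd y (vscale h d).
  by apply: functional_extensionality => i; rewrite /y /vadd /vscale; ring.
have h_gt0 : 0 < Rabs h by apply: Rabs_pos_lt.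
have step_small : norm (vscale h d) < del.
  rewrite normZ.
  have : Rabs h * (norm d + 1) < del.
    have := Rmult_lt_compat_r (norm d + 1) _ _ ltac:(lra) h_small.
    by rewrite /Rdiv Rmult_assoc Rinv_l ?Rmult_1_r; lra.
  nra.
have := Hdel _ step_small; rewrite dotZr normZ => Hy.
have -> : (f (vadd y (vscale h d)) - f y) / h - dot (gradf y) d =
          (f (vadd y (vscale h d)) - f y - h * dot (gradf y) d) / h by field.
rewrite /Rdiv Rabs_mult Rabs_inv.
apply: (Rle_lt_trans _ (eps / (2 * (norm d + 1)) * norm d)).
  apply: (Rmult_le_reg_r (Rabs h)) => //.
  rewrite Rmult_assoc Rinv_l; last lra.
  by rewrite -/(Rdiv eps (2 * (norm d + 1))); nra.
have : eps / (2 * (norm d + 1)) * (norm d + 1) = eps / 2 by field; lra.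
nra.
Qed.

Lemma grad_increment_le x d c : 0 < c ->
  dot (vsub (gradf (vadd x (vscale c d))) (gradf x)) d <= L * c * dot d d.
Proof.
move=> c_gt0.
set U := vsub _ _.
have Lc_gt0 : 0 < L * c by nra.
have normU : norm U <= L * c * norm d.
  have := lip_gradf (vadd x (vscale c d)) x.
  have -> : vsub (vadd x (vscale c d)) x = vscale c d.
    by apply: functional_extensionality => i; rewrite /vadd /vscale /vsub; ring.
  by rewrite normZ Rabs_pos_eq; [rewrite -/U; lra | lra].
have UU : dot U U <= (L * c) ^ 2 * dot d d.
  rewrite -!norm_sq.
  have -> : (L * c) ^ 2 * norm d ^ 2 = (L * c * norm d) ^ 2 by ring.
  by apply: pow_incr; split; [apply: sqrt_pos | exact: normU].
have := dot_young U d (Rinv_0_lt_compat _ Lc_gt0); rewrite Rinv_inv.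
have : / (L * c) * dot U U <= / (L * c) * ((L * c) ^ 2 * dot d d).
  by apply: Rmult_le_compat_l => //; left; apply: Rinv_0_lt_compat.
have -> : / (L * c) * ((L * c) ^ 2 * dot d d) = L * c * dot d d by field; lra.
lra.
Qed.

Lemma descent x d a : 0 <= a ->
  f (vadd x (vscale a d)) <= f x + a * dot (gradf x) d + L * a ^ 2 / 2 * dot d d.
Proof.
move=> a_ge0.
have x0 : vadd x (vscale 0 d) = x.
  by apply: functional_extensionality => i; rewrite /vadd /vscale; ring.
case: (Req_dec a 0) => [->|a_neq0]; first by rewrite x0; lra.
set N := dot d d; set g0 := dot (gradf x) d.
pose phi s := f (vadd x (vscale s d)) - (s * g0 + L / 2 * N * (s * s)).
pose phi' s := dot (gradf (vadd x (vscale s d))) d - (g0 + L * N * s).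
have phi_deriv : forall c, 0 <= c <= a -> derivable_pt_lim phi c (phi' c).
  move=> c _; apply: derivable_pt_lim_minus; first exact: derivable_along.
  have -> : g0 + L * N * c = 1 * g0 + L / 2 * N * (1 * c + c * 1) by field.
  apply: derivable_pt_lim_plus.
    by apply: derivable_pt_lim_scal_right; exact: derivable_pt_lim_id.
  by apply: derivable_pt_lim_scal; apply: derivable_pt_lim_mult;
     exact: derivable_pt_lim_id.
have [c [Hmvt c_in]] := MVT_cor2 phi phi' 0 a ltac:(lra) phi_deriv.
have phi'_le0 : phi' c <= 0.
  have := grad_increment_le x d (proj1 c_in).
  by rewrite dotBl /phi' -/g0 -/N; lra.
have : phi a <= phi 0 by nra.
rewrite /phi x0 /N /g0.
have -> : a ^ 2 = a * a by ring.
lra.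
Qed.

End Smoothness.

Lemma quadratic_model_bound a q r : 0 <= r -> 0 <= q ->
  (forall t, 0 <= t <= 1 ->
     - a + q / 2 <= (1 - r ^ 2) * (- t * a + t ^ 2 * q / 2)) ->
  q <= (1 + r) * a.
Proof.
move=> r_ge0 q_ge0 model.
have a_ge : q / 2 <= a by have := model 0; lra.
case: (Rle_lt_dec q a) => [q_le_a | a_lt_q]; first nra.
(* the minimiser [t = a / q] of the unrestricted model *)
have tq : a / q * q = a by field; lra.
have := model (a / q) ltac:(split; nra).
have -> : (1 - r ^ 2) * (- (a / q) * a + (a / q) ^ 2 * q / 2) =
          - (1 - r ^ 2) * a ^ 2 / (2 * q) by field; lra.
move=> Hmin.
have sq : (q - a) ^ 2 <= (r * a) ^ 2.
  have := Rmult_le_compat_l (2 * q) _ _ ltac:(lra) Hmin.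
  have -> : 2 * q * (- (1 - r ^ 2) * a ^ 2 / (2 * q)) = - (1 - r ^ 2) * a ^ 2
    by field; lra.
  nra.
have : 0 <= r * a by nra.
nra.
Qed.

Section InexactDirection.
Variables (n : nat) (gradf : vec n -> vec n) (D : vec n -> Prop) (psi : vec n -> R).
Hypothesis psi_cvx : psi_convex D psi.

Lemma Qval_Delta x H d :
  Qval gradf psi x H d = Defs.Delta gradf psi x d + / 2 * quad H d.
Proof. by rewrite /Qval /Defs.Delta; ring. Qed.

Lemma eta_inexact_Qval_le0 eta x H d : D x -> eta <= 1 ->
  eta_inexact gradf D psi eta x H d -> Qval gradf psi x H d <= 0.
Proof.
move=> Dx eta_le1 [_ [qs [[qs_lb _] Qd_le]]].
have qs_le0 : qs <= 0.
  by have := qs_lb (fun _ => 0); rewrite /Qdom /Qval vadd0 dot0r quad0 => /(_ Dx); lra.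
nra.
Qed.

Lemma eta_inexact_quad_le eta x H d : D x -> 0 <= eta <= 1 -> 0 <= quad H d ->
  eta_inexact gradf D psi eta x H d ->
  quad H d <= (1 + sqrt eta) * (- Defs.Delta gradf psi x d).
Proof.
move=> Dx eta_in q_ge0 [Dxd [qs [[qs_lb _] Qd_le]]].
apply: quadratic_model_bound => //; first exact: sqrt_pos.
move=> t t_in; rewrite pow2_sqrt; last lra.
have [Dxt psi_xt] := psi_cvx Dxd Dx t_in.
rewrite vadd_convex_shift in Dxt psi_xt.
have := qs_lb _ Dxt; rewrite /Qval dotZr quadZ => Qt.
have qs_le : qs <= t * Defs.Delta gradf psi x d + t ^ 2 * quad H d / 2.
  by rewrite /Defs.Delta; nra.
have := Rmult_le_compat_l (1 - eta) _ _ ltac:(lra) qs_le.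
by rewrite Qval_Delta in Qd_le; lra.
Qed.

End InexactDirection.

Section Armijo.
Variables (n : nat) (f : vec n -> R) (gradf : vec n -> vec n)
          (D : vec n -> Prop) (psi : vec n -> R) (L : R).
Hypothesis grad_f : is_gradient f gradf.
Hypothesis lip_gradf : lipschitz_grad gradf L.
Hypothesis L_gt0 : 0 < L.
Hypothesis psi_cvx : psi_convex D psi.

Lemma armijo_small_step sigma eta gamma x H d a :
  D x -> D (vadd x d) -> psd_ge sigma H -> 0 <= eta -> gamma < 1 ->
  quad H d <= (1 + sqrt eta) * (- Defs.Delta gradf psi x d) ->
  0 <= a <= 1 -> a <= 2 * (1 - gamma) * sigma / ((1 + sqrt eta) * L) ->
  armijo f gradf D psi gamma x d a.
Proof.
move=> Dx Dxd Hsigma eta_ge0 gamma_lt1 Hq a_in a_le.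
have [Dxa psi_xa] := psi_cvx Dxd Dx a_in.
rewrite vadd_convex_shift in Dxa psi_xa.
split => //.
have Hf := descent grad_f lip_gradf L_gt0 x d (proj1 a_in).
set r := sqrt eta in Hq a_le.
have r_ge0 : 0 <= r by apply: sqrt_pos.
set N := dot d d in Hf.
have N_le : sigma * N <= quad H d by rewrite /N -norm_sq; apply: Hsigma.
have N_ge0 : 0 <= N by apply: dot_self_ge0.
set Dl := Defs.Delta gradf psi x d in Hq *.
have a_le' : a * ((1 + r) * L) <= 2 * (1 - gamma) * sigma.
  have := Rmult_le_compat_r ((1 + r) * L) _ _ ltac:(nra) a_le.
  by rewrite /Rdiv Rmult_assoc Rinv_l; [lra | nra].
(* [a L N (1 + r) <= 2 (1 - gamma) sigma N <= 2 (1 - gamma) (1 + r) (-Delta)] *)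
have aLN : a * L * N <= 2 * ((1 - gamma) * (- Dl)).
  apply: (Rmult_le_reg_r (1 + r)); first lra.
  have : a * ((1 + r) * L) * N <= 2 * (1 - gamma) * sigma * N
    by apply: Rmult_le_compat_r.
  have : (1 - gamma) * (sigma * N) <= (1 - gamma) * ((1 + r) * (- Dl))
    by apply: Rmult_le_compat_l; lra.
  nra.
have : a * (a * L * N) <= a * (2 * ((1 - gamma) * (- Dl)))
  by apply: Rmult_le_compat_l; lra.
rewrite /Fv /Dl /Defs.Delta in aLN *.
nra.
Qed.

End Armijo.

Lemma min_upto_lb (g : nat -> R) c : (forall t, c <= g t) ->
  forall k, c <= min_upto g k.
Proof. by move=> Hg; elim=> [|k IH] /=; [exact: Hg | apply: Rmin_glb]. Qed.

Lemma min_upto_gt0 (g : nat -> R) : (forall t, 0 < g t) ->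
  forall k, 0 < min_upto g k.
Proof. by move=> Hg; elim=> [|k IH] /=; [exact: Hg | apply: Rmin_glb_lt]. Qed.

Lemma min_upto_const c k : min_upto (fun _ => c) k = c.
Proof. by elim: k => [|k IH] //=; rewrite IH; apply: Rmin_left; lra. Qed.

Lemma min_upto_rate (Fs a b : nat -> R) g Fstar : 0 < g ->
  (forall t, 0 < a t) -> (forall t, 0 <= b t) ->
  (forall t, Fs (S t) <= Fs t - g * a t * b t) -> (forall t, Fstar <= Fs t) ->
  forall k, min_upto b k <= (Fs O - Fstar) / (g * INR (k + 1) * min_upto a k).
Proof.
move=> g_gt0 a_gt0 b_ge0 decrease Fs_ge k.
have ma_gt0 := min_upto_gt0 a_gt0.
have mb_ge0 := min_upto_lb b_ge0.
have telescope : forall j,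
    Fs (S j) <= Fs O - g * INR (j + 1) * (min_upto a j * min_upto b j).
  elim=> [|j IH]; first by rewrite /=; have := decrease O; lra.
  have -> : INR (j.+1 + 1) = INR (j + 1) + 1 by rewrite !addn1 S_INR.
  have drop_prev : min_upto a j.+1 * min_upto b j.+1 <= min_upto a j * min_upto b j.
    by apply: Rmult_le_compat; [left; exact: ma_gt0 | exact: mb_ge0 | exact: Rmin_l | exact: Rmin_l].
  have drop_last : min_upto a j.+1 * min_upto b j.+1 <= a j.+1 * b j.+1.
    by apply: Rmult_le_compat; [left; exact: ma_gt0 | exact: mb_ge0 | exact: Rmin_r | exact: Rmin_r].
  have : g * INR (j + 1) * (min_upto a j.+1 * min_upto b j.+1) <=
         g * INR (j + 1) * (min_upto a j * min_upto b j).
    by apply: Rmult_le_compat_l => //; apply: Rmult_le_pos; [lra | exact: pos_INR].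
  have : g * (min_upto a j.+1 * min_upto b j.+1) <= g * (a j.+1 * b j.+1).
    by apply: Rmult_le_compat_l; lra.
  have := decrease j.+1.
  nra.
have tel := telescope k.
have k1_gt0 : 0 < INR (k + 1) by apply: lt_0_INR; rewrite addn1; apply/ltP.
have den_gt0 : 0 < g * INR (k + 1) * min_upto a k.
  by apply: Rmult_lt_0_compat; [apply: Rmult_lt_0_compat | exact: ma_gt0].
set P := g * INR (k + 1) * min_upto a k in den_gt0 *.
apply: (Rmult_le_reg_r P) => //.
have -> : (Fs O - Fstar) / P * P = Fs O - Fstar by field; lra.
have -> : min_upto b k * P = g * INR (k + 1) * (min_upto a k * min_upto b k).
  by rewrite /P; ring.
by have := Fs_ge (S k); lra.
Qed.

Section Algorithm1.
Variables (n : nat) (f : vec n -> R) (gradf : vec n -> vec n)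
          (D : vec n -> Prop) (psi : vec n -> R) (L : R).
Hypothesis grad_f : is_gradient f gradf.
Hypothesis lip_gradf : lipschitz_grad gradf L.
Hypothesis L_gt0 : 0 < L.
Hypothesis psi_cvx : psi_convex D psi.
Variables (beta gamma eta sigma : R) (x0 : vec n) (x : nat -> vec n)
          (H : nat -> mat n) (d : nat -> vec n) (alpha : nat -> R).
Hypothesis run : alg1_run f gradf D psi beta gamma eta x0 x H d alpha.
Hypothesis Dx0 : D x0.
Hypothesis sigma_gt0 : 0 < sigma.
Hypothesis H_ge : forall k, psd_ge sigma (H k).
Variable Fstar : R.
Hypothesis Fstar_lb : forall y, D y -> Fstar <= Fv f psi y.

Let Q k := Qval gradf psi (x k) (H k) (d k).

Lemma alg1_iterate_in_domain k : D (x k).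
Proof.
have [_ [_ [_ [x_0 step]]]] := run.
elim: k => [|k _]; first by rewrite x_0.
have [_ [_ [_ [[i [alpha_k [[Dxa _] _]]] ->]]]] := step k.
by rewrite alpha_k.
Qed.

Lemma alg1_step_gt0 k : 0 < alpha k.
Proof.
have [[beta_gt0 _] [_ [_ [_ step]]]] := run.
by have [_ [_ [_ [[i [-> _]] _]]]] := step k; apply: pow_lt.
Qed.

Lemma alg1_quad_le k : quad (H k) (d k) <= (1 + sqrt eta) * (- Defs.Delta gradf psi (x k) (d k)).
Proof.
have [_ [_ [eta_in [_ step]]]] := run; have [_ [_ [inexact _]]] := step k.
apply: (eta_inexact_quad_le psi_cvx (alg1_iterate_in_domain k) _ _ inexact); first lra.
by have := H_ge k (d k); have := pow2_ge_0 (norm (d k)); nra.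
Qed.

Lemma alg1_decrease k : Fv f psi (x (S k)) <= Fv f psi (x k) - gamma * alpha k * Rabs (Q k).
Proof.
have [_ [[gamma_gt0 _] [eta_in [_ step]]]] := run.
have [_ [_ [inexact [[i [alpha_k [[_ HF] _]]] ->]]]] := step k.
have Q_le0 : Q k <= 0
  by apply: (eta_inexact_Qval_le0 (alg1_iterate_in_domain k) _ inexact); lra.
have Delta_le : Defs.Delta gradf psi (x k) (d k) <= Q k.
  by rewrite /Q Qval_Delta; have := H_ge k (d k); have := pow2_ge_0 (norm (d k)); nra.
rewrite Rabs_left1 //; rewrite -alpha_k in HF.
have : 0 <= alpha k * gamma by have := alg1_step_gt0 k; nra.
nra.
Qed.

Lemma alg1_step_ge k :
  / Rmax 1 ((1 + sqrt eta) * L / (2 * beta * (1 - gamma) * sigma)) <= alpha k.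
Proof.
have [[beta_gt0 beta_lt1] [gamma_in [eta_in [_ step]]]] := run.
have [_ [_ [[Dxd _] [[i [-> [_ minimal]]] _]]]] := step k.
set c := (1 + sqrt eta) * L / (2 * beta * (1 - gamma) * sigma).
set tau := 2 * (1 - gamma) * sigma / ((1 + sqrt eta) * L).
have sqrt_ge0 : 0 <= sqrt eta by apply: sqrt_pos.
have tau_gt0 : 0 < tau.
  by apply: Rdiv_lt_0_compat; apply: Rmult_lt_0_compat; lra.
have c_eq : c = / (beta * tau) by rewrite /c /tau; field; repeat split; lra.
have c_gt0 : 0 < c by rewrite c_eq; apply/Rinv_0_lt_compat/Rmult_lt_0_compat.
case: i minimal => [|j] minimal.
  by rewrite /= -{2}Rinv_1; apply: Rinv_le_contravar; [lra | apply: Rmax_l].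
(* the rejected trial [beta ^ j] exceeds [tau], which the Armijo test always accepts *)
have tau_lt : tau < beta ^ j.
  apply: Rnot_le_lt => le_tau; apply: (minimal j (ltnSn j)).
  apply: (armijo_small_step (eta := eta) grad_f lip_gradf L_gt0 psi_cvx
            (alg1_iterate_in_domain k) Dxd (H_ge k)) => //; try lra.
    exact: alg1_quad_le.
  by split; [apply: pow_le; lra | rewrite -(pow1 j); apply: pow_incr; lra].
have inv_le : / Rmax 1 c <= / c.
  by apply: Rinv_le_contravar; [exact: c_gt0 | apply: Rmax_r].
apply: (Rle_trans _ _ _ inv_le); rewrite c_eq Rinv_inv /=.
by apply: Rmult_le_compat_l; lra.
Qed.

Lemma alg1_rate k :
  min_upto (fun t => Rabs (Q t)) k <=
    (Fv f psi x0 - Fstar) / (gamma * INR (k + 1) * min_upto alpha k) /\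
  (Fv f psi x0 - Fstar) / (gamma * INR (k + 1) * min_upto alpha k) <=
    (Fv f psi x0 - Fstar) / (gamma * INR (k + 1)) *
    Rmax 1 ((1 + sqrt eta) * L / (2 * beta * (1 - gamma) * sigma)).
Proof.
have [_ [[gamma_gt0 _] [_ [x_0 _]]]] := run.
split.
  rewrite -x_0; apply: (min_upto_rate (Fs := fun t => Fv f psi (x t))) => //.
  - exact: alg1_step_gt0.
  - by move=> t; apply: Rabs_pos.
  - exact: alg1_decrease.
  - by move=> t; apply/Fstar_lb/alg1_iterate_in_domain.
set M := Rmax 1 _.
have M_gt0 : 0 < M by apply: (Rlt_le_trans _ 1); [lra | apply: Rmax_l].
have ma_gt0 := min_upto_gt0 alg1_step_gt0 k.
have inv_ma : / min_upto alpha k <= M.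
  rewrite -(Rinv_inv M); apply: Rinv_le_contravar; first exact: Rinv_0_lt_compat.
  by apply: min_upto_lb; exact: alg1_step_ge.
have k1_gt0 : 0 < INR (k + 1) by apply: lt_0_INR; rewrite addn1; apply/ltP.
have A_ge0 : 0 <= Fv f psi x0 - Fstar by have := Fstar_lb Dx0; lra.
have -> : (Fv f psi x0 - Fstar) / (gamma * INR (k + 1) * min_upto alpha k) =
          (Fv f psi x0 - Fstar) / (gamma * INR (k + 1)) * / min_upto alpha k.
  by field; repeat split; lra.
apply: Rmult_le_compat_l => //.
rewrite /Rdiv; apply: Rmult_le_pos => //.
by left; apply/Rinv_0_lt_compat/Rmult_lt_0_compat.
Qed.

End Algorithm1.

Section Algorithm2.
Variables (n : nat) (f : vec n -> R) (gradf : vec n -> vec n)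
          (D : vec n -> Prop) (psi : vec n -> R).
Variables (v : variant) (beta gamma eta : R) (x0 : vec n) (x : nat -> vec n)
          (H0 : nat -> mat n) (m : nat -> nat) (Hs : nat -> nat -> mat n)
          (ds : nat -> nat -> vec n).
Hypothesis run : alg2_run f gradf D psi v beta gamma eta x0 x H0 m Hs ds.
Hypothesis Dx0 : D x0.
Variable Fstar : R.
Hypothesis Fstar_lb : forall y, D y -> Fstar <= Fv f psi y.

Let Q k := Qval gradf psi (x k) (Hs k (m k)) (ds k (m k)).

Lemma alg2_iterate_in_domain k : D (x k).
Proof.
have [_ [_ [_ [x_0 step]]]] := run.
elim: k => [|k _]; first by rewrite x_0.
by have [_ [_ [_ [_ [_ [[Dxd _] ->]]]]]] := step k.
Qed.

Lemma alg2_decrease k : Fv f psi (x (S k)) <= Fv f psi (x k) - gamma * 1 * Rabs (Q k).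
Proof.
have [_ [[gamma_gt0 _] [_ [_ step]]]] := run.
have [_ [_ [_ [_ [_ [[_ [accepted Q_le0]] ->]]]]]] := step k.
have : Q k <= 0 by rewrite /Q; nra.
by move=> ?; rewrite Rabs_left1 //; rewrite /Q in accepted *; lra.
Qed.

Lemma alg2_rate k :
  min_upto (fun t => Rabs (Q t)) k <= (Fv f psi x0 - Fstar) / (gamma * INR (k + 1)).
Proof.
have [_ [[gamma_gt0 _] [_ [x_0 _]]]] := run.
have := @min_upto_rate (fun t => Fv f psi (x t)) (fun _ => 1) (fun t => Rabs (Q t))
  gamma Fstar gamma_gt0 (fun _ => Rlt_0_1) (fun t => Rabs_pos _) alg2_decrease
  (fun t => Fstar_lb (alg2_iterate_in_domain t)) k.
by rewrite min_upto_const Rmult_1_r x_0.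
Qed.

End Algorithm2.

Theorem lemma8 (n : nat) (f : vec n -> R) (gradf : vec n -> vec n)
    (D : vec n -> Prop) (psi : vec n -> R) (L Fstar eta : R) (x0 : vec n) :
  assumption1 f gradf D psi L Fstar ->
  0 <= eta < 1 ->
  D x0 ->
  (* Algorithm 1 *)
  (forall (beta gamma sigma : R) (x : nat -> vec n) (H : nat -> mat n)
          (d : nat -> vec n) (alpha : nat -> R),
     alg1_run f gradf D psi beta gamma eta x0 x H d alpha ->
     0 < sigma -> (forall k, psd_ge sigma (H k)) ->
     forall k : nat,
       min_upto (fun t => Rabs (Qval gradf psi (x t) (H t) (d t))) k
         <= (Fv f psi x0 - Fstar) / (gamma * INR (k + 1) * min_upto alpha k)
       /\
       (Fv f psi x0 - Fstar) / (gamma * INR (k + 1) * min_upto alpha k)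
         <= (Fv f psi x0 - Fstar) / (gamma * INR (k + 1)) *
            Rmax 1 ((1 + sqrt eta) * L / (2 * beta * (1 - gamma) * sigma)))
  /\
  (* Algorithm 2 (both variants) *)
  (forall (v : variant) (beta gamma : R) (x : nat -> vec n)
          (H0 : nat -> mat n) (m : nat -> nat) (Hs : nat -> nat -> mat n)
          (ds : nat -> nat -> vec n),
     alg2_run f gradf D psi v beta gamma eta x0 x H0 m Hs ds ->
     forall k : nat,
       min_upto (fun t => Rabs (Qval gradf psi (x t) (Hs t (m t)) (ds t (m t)))) k
         <= (Fv f psi x0 - Fstar) / (gamma * INR (k + 1))).
Proof.
move=> [L_gt0 [grad_f [lip_gradf [psi_cvx [_ [_ [[Fstar_lb _] _]]]]]]] _ Dx0.
split.
- move=> beta gamma sigma x H d alpha run sigma_gt0 H_ge k.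
  exact: (alg1_rate grad_f lip_gradf L_gt0 psi_cvx run Dx0 sigma_gt0 H_ge Fstar_lb).
- move=> v beta gamma x H0 m Hs ds run k.
  exact: (alg2_rate run Dx0 Fstar_lb).
Qed.
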